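(* Let $\mathcal{Q}_A,\mathcal{K}_A,\mathcal{Q}_B,\mathcal{K}_B$ be finite nonempty sets of values, and let $\mathrm{pred}_A:\mathcal{Q}_A\times\mathcal{K}_A\to\{0,1\}$ and $\mathrm{pred}_B:\mathcal{Q}_B\times\mathcal{K}_B\to\{0,1\}$ be predicates. Let the disjoint union $\mathcal{Q}_A\sqcup\mathcal{K}_A\sqcup\mathcal{Q}_B\sqcup\mathcal{K}_B$ index an orthonormal family of vectors $e_v\in\mathbb{R}^d$ (so the four value sets are embedded one-hot in mutually orthogonal subspaces $Q_A,K_A,Q_B,K_B$). A query token carries a pair $(a,b)\in\mathcal{Q}_A\times\mathcal{Q}_B$ with query vector $e_a+e_b$, and a key token carries a pair $(a',b')\in\mathcal{K}_A\times\mathcal{K}_B$ with key vector $e_{a'}+e_{b'}$. Define the combined selection $$S\big((a,b),(a',b')\big)=\mathrm{pred}_A(a,a')\ \vee\ \mathrm{pred}_B(b,b').$$ Suppose there is a matrix $W\in\mathbb{R}^{d\times d}$ such that the logits $L\big((a,b),(a',b')\big)=(e_a+e_b)^\top W(e_{a'}+e_{b'})$ satisfy, for every query $q\in\mathcal{Q}_A\times\mathcal{Q}_B$ and all keys $k,k'\in\mathcal{K}_A\times\mathcal{K}_B$: (i) if $S(q,k)=S(q,k')=1$ then $L(q,k)=L(q,k')$; and (ii) if $S(q,k)=1$ and $S(q,k')=0$ then $L(q,k)>L(q,k')$. (These are the conditions under which, in the zero-temperature limit $T\to0^+$ of $\mathrm{softmax}(T^{-1}L)$ over any set of key tokens, the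 attention weights converge to the uniform distribution over the tokens selected by $S$, i.e. to the normalized weights of the selector ''$\mathrm{select}(\mathrm{query}_A,\mathrm{key}_A,\mathrm{pred}_A)$ or $\mathrm{select}(\mathrm{query}_B,\mathrm{key}_B,\mathrm{pred}_B)$''.) Then either $\mathrm{pred}_A$ is constant, or $\mathrm{pred}_B$ is constant, or both predicates have rank one, meaning there exist functions $f_A:\mathcal{Q}_A\to\{0,1\}$, $g_A:\mathcal{K}_A\to\{0,1\}$ with $\mathrm{pred}_A(a,a')=f_A(a)\wedge g_A(a')$ for all $a,a'$, and likewise $f_B,g_B$ with $\mathrm{pred}_B(b,b')=f_B(b)\wedge g_B(b')$ for all $b,b'$.
   Context: This concerns implementing a Boolean ''or'' of two RASP selectors as a single attention head. A RASP selector $\mathrm{select}(\mathrm{query},\mathrm{key},\mathrm{pred})$ evaluated on a sequence gives the $0/1$ matrix whose $(i,j)$ entry is $\mathrm{pred}(\mathrm{query}_i,\mathrm{key}_j)$. An attention head with bilinear form $W$ (the $W_{QK}$ matrix) assigns to query token $i$ and key token $j$ the logit $x_i^\top W x_j$, where $x_i$ is the token's residual-stream vector, and attention weights are $\mathrm{softmax}$ of the logits scaled by an inverse temperature $T^{-1}$. *)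

From HB Require Import structures.
From mathcomp Require Import all_boot all_order all_algebra.
From mathcomp Require Import reals.
Set Implicit Arguments. Unset Strict Implicit. Unset Printing Implicit Defensive.
Import Order.TTheory GRing.Theory Num.Theory.
Local Open Scope ring_scope.

Definition vidx (QA KA QB KB : finType) : finType := (QA + KA + QB + KB)%type.

Definition iQA {QA KA QB KB : finType} (a : QA) : vidx QA KA QB KB :=
  inl (inl (inl a)).
Definition iKA {QA KA QB KB : finType} (a : KA) : vidx QA KA QB KB :=
  inl (inl (inr a)).
Definition iQB {QA KA QB KB : finType} (b : QB) : vidx QA KA QB KB :=
  inl (inr b).
Definition iKB {QA KA QB KB : finType} (b : KB) : vidx QA KA QB KB :=
  inr b.

Definition dotv {R : ringType} {d : nat} (x y : 'cV[R]_d) : R :=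
  ((x^T *m y) 0 0).

Definition orthonormal_family {R : ringType} {d : nat} {I : finType}
  (e : I -> 'cV[R]_d) : Prop :=
  forall u v : I, dotv (e u) (e v) = (u == v)%:R.

Definition bilin {R : ringType} {d : nat} (W : 'M[R]_d) (x y : 'cV[R]_d) : R :=
  ((x^T *m W *m y) 0 0).

Definition const_pred {Q K : Type} (p : Q -> K -> bool) : Prop :=
  exists c : bool, forall a a', p a a' = c.

Definition rank_one_pred {Q K : Type} (p : Q -> K -> bool) : Prop :=
  exists (f : Q -> bool) (g : K -> bool), forall a a', p a a' = f a && g a'.

From HB Require Import structures.
From mathcomp Require Import all_boot all_order all_algebra.
From mathcomp Require Import reals.
From mathcomp Require Import lra.
Import Order.TTheory GRing.Theory Num.Theory.
Local Open Scope ring_scope.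

(* By bilinearity the logit of query (a, b) and key (x, y) is a sum
   alpha a x + beta a y + gamma b x + delta b y, so for a fixed query it is an
   additively separable function of the key. If row a of pred_A and row b of
   pred_B both took both values, picking x1, x0, y1, y0 accordingly gives
   L(x1,y1) = L(x1,y0) = L(x0,y1) > L(x0,y0), contradicting
   L(x1,y1) + L(x0,y0) = L(x1,y0) + L(x0,y1). Hence all rows of one predicate,
   say pred_A, are constant; such a predicate is rank one. If moreover pred_A is
   not constant, there are a1, a0 whose rows are all true, resp. all false, and
   comparing the logits of the queries (a1, b) and (a0, b) shows that the
   single function beta a0 - beta a1 separates selected from unselected keys
   for every row b of pred_B, which forces pred_B to be rank one. *)

Lemma constantP {T : finType} (p : pred T) :
  (forall x y, p x = p y) \/ exists x1 x0, p x1 && ~~ p x0.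
Proof.
case: (boolP [exists x, p x]) => [/existsP [x1 px1] | /existsPn none].
  case: (boolP [forall x, p x]) => [/forallP all | /forallPn [x0 px0]].
    by left=> x y; rewrite !all.
  by right; exists x1, x0; rewrite px1.
by left=> x y; rewrite !(negbTE (none _)).
Qed.

Lemma const_rowsP {Q K : finType} (p : Q -> K -> bool) :
  (forall a x y, p a x = p a y) \/ exists a x1 x0, p a x1 && ~~ p a x0.
Proof.
case: (boolP [forall a, [forall x, [forall y, p a x == p a y]]]).
  move=> /forallP rows; left=> a x y; apply/eqP.
  by move/forallP: (rows a) => /(_ x) /forallP.
move=> /forallPn [a nrow]; case: (constantP (p a)) => [c | [x1 [x0 w]]].
  by case/negP: nrow; apply/forallP => x; apply/forallP => y; rewrite (c x y).
by right; exists a, x1, x0.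
Qed.

Lemma const_pred_or_column {Q K : finType} (p : Q -> K -> bool) :
  (forall a x y, p a x = p a y) ->
  const_pred p \/ exists a1 a0 x, p a1 x && ~~ p a0 x.
Proof.
move=> rows; case: (constantP (fun k : Q * K => p k.1 k.2)).
  move=> c; left; case: (pickP (@predT (Q * K))) => [k0 _ | none].
    by exists (p k0.1 k0.2) => a x; exact: (c (a, x) k0).
  by exists false => a x; have := none (a, x).
move=> [[a1 x1] [[a0 x0] /= w]]; right; exists a1, a0, x0.
by rewrite (rows a1 x0 x1).
Qed.

Section OrSelection.
Context {R : realType}.

(* The zero-temperature limit of softmax of [s] is then uniform on [sel]. *)
Definition separates {K : Type} (sel : pred K) (s : K -> R) :=
  forall k k', sel k -> (sel k' -> s k' = s k) /\ (~~ sel k' -> s k' < s k).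

Lemma separates_ext {K : Type} (sel sel' : pred K) (s s' : K -> R) :
  sel =1 sel' -> s =1 s' -> separates sel s -> separates sel' s'.
Proof. by move=> esel es hs k k'; rewrite -!esel -!es; exact: hs. Qed.

Lemma separates_comp {K K' : Type} (f : K' -> K) {sel : pred K} {s : K -> R} :
  separates sel s -> separates (sel \o f) (s \o f).
Proof. by move=> hs k k'; exact: hs. Qed.

Lemma rank_one_pred_of_separates {Q K : finType}
    (p : Q -> K -> bool) (h : K -> R) :
  (forall a, separates (p a) h) -> rank_one_pred p.
Proof.
move=> hs; exists (fun a => [exists x, p a x]), (fun x => [forall x', h x' <= h x]).
move=> a x; case pax: (p a x).
  apply/esym/andP; split; first by apply/existsP; exists x.
  apply/forallP => x'; have [eq lt] := hs a x x' pax.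
  by case: (boolP (p a x')) => [/eq -> | /lt /ltW].
apply/esym/negbTE/negP => /andP [/existsP [x' pax'] /forallP hmax].
have [_ lt] := hs a x' x pax'.
by move: (lt (negbT pax)); rewrite ltNge hmax.
Qed.

Lemma rank_one_pred_of_const_rows {Q K : finType} (p : Q -> K -> bool) :
  (forall a x y, p a x = p a y) -> rank_one_pred p.
Proof.
move=> rows; apply: (@rank_one_pred_of_separates _ _ p (fun=> 0)) => a x y pax.
by rewrite (rows a y x) pax.
Qed.

Lemma separates_or_const {KA KB : finType} (p : pred KA) (r : pred KB)
    (s : KA * KB -> R) :
  (forall x x' y y', s (x, y) + s (x', y') = s (x, y') + s (x', y)) ->
  separates (fun k => p k.1 || r k.2) s ->
  (forall x x', p x = p x') \/ (forall y y', r y = r y').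
Proof.
move=> additive hs.
case: (constantP p) => [| [x1 [x0 /andP [px1 px0]]]]; first by left.
case: (constantP r) => [| [y1 [y0 /andP [ry1 ry0]]]]; first by right.
have := hs (x1, y1) (x1, y0); rewrite /= px1 => /(_ erefl) [/(_ erefl) e1 _].
have := hs (x1, y1) (x0, y1); rewrite /= px1 ry1 !orbT => /(_ erefl) [/(_ erefl) e2 _].
have := hs (x1, y1) (x0, y0); rewrite /= px1 (negbTE px0) (negbTE ry0).
move=> /(_ erefl) [_ /(_ erefl) lt].
have := additive x1 x0 y1 y0; lra.
Qed.

Definition or_separated {QA KA QB KB : finType}
    (pA : QA -> KA -> bool) (pB : QB -> KB -> bool)
    (alpha : QA -> KA -> R) (beta : QA -> KB -> R)
    (gamma : QB -> KA -> R) (delta : QB -> KB -> R) :=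
  forall a b, separates (fun k : KA * KB => pA a k.1 || pB b k.2)
    (fun k => alpha a k.1 + beta a k.2 + gamma b k.1 + delta b k.2).

Section Logits.
Context {QA KA QB KB : finType}.
Context {pA : QA -> KA -> bool} {pB : QB -> KB -> bool}.
Context {alpha : QA -> KA -> R} {beta : QA -> KB -> R}.
Context {gamma : QB -> KA -> R} {delta : QB -> KB -> R}.
Hypothesis hsep : or_separated pA pB alpha beta gamma delta.

Lemma or_separated_swap : or_separated pB pA delta gamma beta alpha.
Proof.
move=> b a; have := separates_comp (fun k : KB * KA => (k.2, k.1)) (hsep a b).
by apply: separates_ext => -[y x] /=; [rewrite orbC | lra].
Qed.

Lemma or_separated_rows a b :
  (forall x x', pA a x = pA a x') \/ (forall y y', pB b y = pB b y').
Proof. by apply: separates_or_const (hsep a b) => x x' y y' /=; lra. Qed.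

Lemma or_separated_rank_one a1 a0 x :
  pA a1 x && ~~ pA a0 x -> rank_one_pred pB.
Proof.
move=> /andP [p1 p0].
apply: (@rank_one_pred_of_separates _ _ pB (fun y => beta a0 y - beta a1 y)).
move=> b y y' py.
have /= := hsep a1 b (x, y) (x, y'); rewrite p1 => /(_ erefl) [/(_ erefl) e1 _].
have /= := hsep a0 b (x, y) (x, y'); rewrite (negbTE p0) py => /(_ erefl) [e2 e3].
by split=> [py' | npy']; [move: (e2 py') | move: (e3 npy')]; lra.
Qed.

End Logits.
End OrSelection.

Lemma bilinDD (R : ringType) d (W : 'M[R]_d) x y z w :
  bilin W (x + y) (z + w) = bilin W x z + bilin W x w + bilin W y z + bilin W y w.
Proof.
rewrite /bilin linearD /= !mulmxDl !mulmxDr !mxE addrA.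
by rewrite -!addrA; congr (_ + _); rewrite addrCA.
Qed.

Theorem mainTheorem1 (R : realType) (d : nat) (QA KA QB KB : finType)
  (neQA : (0 < #|QA|)%N) (neKA : (0 < #|KA|)%N)
  (neQB : (0 < #|QB|)%N) (neKB : (0 < #|KB|)%N)
  (predA : QA -> KA -> bool) (predB : QB -> KB -> bool)
  (e : vidx QA KA QB KB -> 'cV[R]_d) (e_on : orthonormal_family e)
  (W : 'M[R]_d) :
  let S := fun (q : QA * QB) (k : KA * KB) => predA q.1 k.1 || predB q.2 k.2 in
  let L := fun (q : QA * QB) (k : KA * KB) =>
    bilin W (e (iQA q.1) + e (iQB q.2)) (e (iKA k.1) + e (iKB k.2)) in
  (forall q k k', S q k -> S q k' -> L q k = L q k') ->
  (forall q k k', S q k -> ~~ S q k' -> L q k' < L q k) ->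
  const_pred predA \/ const_pred predB \/
  (rank_one_pred predA /\ rank_one_pred predB).
Proof.
move=> S L hS1 hS2.
have hsep : or_separated predA predB
    (fun a x => bilin W (e (iQA a)) (e (iKA x)))
    (fun a y => bilin W (e (iQA a)) (e (iKB y)))
    (fun b x => bilin W (e (iQB b)) (e (iKA x)))
    (fun b y => bilin W (e (iQB b)) (e (iKB y))).
  move=> a b k k' sel; rewrite -!bilinDD; split=> [sel' | nsel'].
  - exact/esym/(hS1 (a, b)).
  - exact: (hS2 (a, b)).
case: (const_rowsP predA) => [rowsA | [a [x1 [x0 nrowA]]]].
  case: (const_pred_or_column predA rowsA) => [| [a1 [a0 [x colA]]]]; first by left.
  right; right; split; first exact: rank_one_pred_of_const_rows.
  exact: or_separated_rank_one hsep _ _ _ colA.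
have rowsB b y y' : predB b y = predB b y'.
  case: (or_separated_rows hsep a b) => [rowA | ]; last by apply.
  by move: nrowA; rewrite (rowA x0 x1) andbN.
case: (const_pred_or_column predB rowsB) => [| [b1 [b0 [y colB]]]]; first by right; left.
right; right; split; last exact: rank_one_pred_of_const_rows.
exact: or_separated_rank_one (or_separated_swap hsep) _ _ _ colB.
Qed.
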